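(* For every basis $\Gamma$, terms $M,N\in\Lambda_R$ and type $\sigma\in\mathbb{T}$: if $\Gamma\vdash M:\sigma$ and $M\to N$, then $\Gamma\vdash N:\sigma$.
   Context: \textbf{Terms.} $\Lambda_R\ni M,N ::= x\mid\lambda x.M\mid MN\mid M.l\mid R\mid M\oplus R$, with records $R ::= \langle l_i=M_i\mid i\in I\rangle$ ($I$ finite, labels pairwise distinct), $x$ ranging over variables and $l$ over labels; $\mathit{lbl}(\langle l_i=M_i\mid i\in I\rangle)=\{l_i\mid i\in I\}$. Reduction $\to$ is the least compatible relation (closed under all term constructors) containing $(\lambda x.M)N\to M[N/x]$ (capture-avoiding substitution); $\langle l_i=M_i\mid i\in I\rangle.l_j\to M_j$ if $j\in I$; $\langle l_i=M_i\mid i\in I\rangle\oplus\langle l_j=N_j\mid j\in J\rangle\to\langle l_i=M_i,\ l_j=N_j\mid i\in I\setminus J,\ j\in J\rangle$. \textbf{Types.} $\mathbb{T}\ni\sigma ::= a\mid\omega\mid\sigma_1\to\sigma_2\mid\sigma_1\cap\sigma_2\mid\rho$, record types $\mathbb{T}_R\ni\rho ::= \langle\rangle\mid\langle l:\sigma\rangle\mid\rho_1+\rho_2\mid\rho_1\cap\rho_2$. Subtyping $\le$ is the least preorder with: $\sigma\le\omega$; $\omega\le\omega\to\omega$; $\sigma\cap\tau\le\sigma$; $\sigma\cap\tau\le\tau$; $\sigma\le\tau_1,\sigma\le\tau_2\Rightarrow\sigma\le\tau_1\cap\tau_2$; $(\sigma\to\tau_1)\cap(\sigma\to\tau_2)\le\sigma\to\tau_1\cap\tau_2$;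 $\sigma_2\le\sigma_1,\tau_1\le\tau_2\Rightarrow\sigma_1\to\tau_1\le\sigma_2\to\tau_2$; $\langle l:\sigma\rangle\le\langle\rangle$; $\langle l:\sigma\rangle\cap\langle l:\tau\rangle\le\langle l:\sigma\cap\tau\rangle$; $\sigma\le\tau\Rightarrow\langle l:\sigma\rangle\le\langle l:\tau\rangle$; $\rho+\langle\rangle=\langle\rangle+\rho=\rho$; $(\rho_1+\rho_2)+\rho_3=\rho_1+(\rho_2+\rho_3)$; $(\rho_1\cap\rho_2)+\rho_3=(\rho_1+\rho_3)\cap(\rho_2+\rho_3)$; $\langle l:\sigma\rangle+(\langle l:\tau\rangle\cap\rho)=\langle l:\tau\rangle\cap\rho$; $\langle l:\sigma\rangle+(\langle l':\tau\rangle\cap\rho)=\langle l':\tau\rangle\cap(\langle l:\sigma\rangle+\rho)$ if $l\neq l'$; $\rho_1\le\rho_2\Rightarrow\rho_1+\rho\le\rho_2+\rho$; $\rho_1=\rho_2\Rightarrow\rho+\rho_1=\rho+\rho_2$; where $\sigma=\tau$ means $\sigma\le\tau$ and $\tau\le\sigma$. $\mathit{lbl}(\langle\rangle)=\emptyset$, $\mathit{lbl}(\langle l:\sigma\rangle)=\{l\}$, $\mathit{lbl}(\rho_1\cap\rho_2)=\mathit{lbl}(\rho_1+\rho_2)=\mathit{lbl}(\rho_1)\cup\mathit{lbl}(\rho_2)$. \textbf{Type assignment.} A basis $\Gamma$ is a finite set $\{x_1:\sigma_1,\ldots,x_n:\sigma_n\}$ with distinct variables. Rules: $\Gamma\vdash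 x:\sigma$ if $x:\sigma\in\Gamma$; from $\Gamma,x:\sigma\vdash M:\tau$ infer $\Gamma\vdash\lambda x.M:\sigma\to\tau$; from $\Gamma\vdash M:\sigma\to\tau$, $\Gamma\vdash N:\sigma$ infer $\Gamma\vdash MN:\tau$; from $\Gamma\vdash M:\sigma$, $\Gamma\vdash M:\tau$ infer $\Gamma\vdash M:\sigma\cap\tau$; $\Gamma\vdash M:\omega$; from $\Gamma\vdash M:\sigma$, $\sigma\le\tau$ infer $\Gamma\vdash M:\tau$; $\Gamma\vdash\langle l_i=M_i\mid i\in I\rangle:\langle\rangle$; from $\Gamma\vdash M_k:\sigma$, $k\in I$ infer $\Gamma\vdash\langle l_i=M_i\mid i\in I\rangle:\langle l_k:\sigma\rangle$; from $\Gamma\vdash M:\langle l:\sigma\rangle$ infer $\Gamma\vdash M.l:\sigma$; from $\Gamma\vdash M:\rho_1$, $\Gamma\vdash R:\rho_2$ and $\mathit{lbl}(R)=\mathit{lbl}(\rho_2)$ infer $\Gamma\vdash M\oplus R:\rho_1+\rho_2$. *)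

From Stdlib Require Import List Arith Bool.
Import ListNotations.

Definition label := nat.
Definition atom := nat.

Inductive term : Type :=
| Var : nat -> term
| Lam : term -> term
| App : term -> term -> term
| Sel : term -> label -> term
| Rec : list (label * term) -> term
| Merge : term -> list (label * term) -> term.

Definition rec_lbl (fs : list (label * term)) : list label := map fst fs.

(** Terms of Lambda_R: all records have pairwise distinct labels. *)
Inductive wf_term : term -> Prop :=
| wf_Var : forall n, wf_term (Var n)
| wf_Lam : forall M, wf_term M -> wf_term (Lam M)
| wf_App : forall M N, wf_term M -> wf_term N -> wf_term (App M N)
| wf_Sel : forall M l, wf_term M -> wf_term (Sel M l)
| wf_Rec : forall fs, NoDup (rec_lbl fs) ->
    Forall (fun p => wf_term (snd p)) fs -> wf_term (Rec fs)
| wf_Merge : forall M fs, wf_term M -> NoDup (rec_lbl fs) ->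
    Forall (fun p => wf_term (snd p)) fs -> wf_term (Merge M fs).

Fixpoint lift_by (k c : nat) (M : term) : term :=
  match M with
  | Var n => if c <=? n then Var (n + k) else Var n
  | Lam M1 => Lam (lift_by k (S c) M1)
  | App M1 M2 => App (lift_by k c M1) (lift_by k c M2)
  | Sel M1 l => Sel (lift_by k c M1) l
  | Rec fs => Rec (map (fun p => (fst p, lift_by k c (snd p))) fs)
  | Merge M1 fs => Merge (lift_by k c M1) (map (fun p => (fst p, lift_by k c (snd p))) fs)
  end.

(** subst M k N : capture-avoiding substitution of N for variable k in M
    (variables above k are decremented since the binder disappears). *)
Fixpoint subst (M : term) (k : nat) (N : term) : term :=
  match M with
  | Var n => if n <? k then Var n
             else if n =? k then lift_by k 0 N
             else Var (pred n)
  | Lam M1 => Lam (subst M1 (S k) N)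
  | App M1 M2 => App (subst M1 k N) (subst M2 k N)
  | Sel M1 l => Sel (subst M1 k N) l
  | Rec fs => Rec (map (fun p => (fst p, subst (snd p) k N)) fs)
  | Merge M1 fs => Merge (subst M1 k N) (map (fun p => (fst p, subst (snd p) k N)) fs)
  end.

Definition rec_merge (fs gs : list (label * term)) : list (label * term) :=
  filter (fun p => negb (existsb (Nat.eqb (fst p)) (rec_lbl gs))) fs ++ gs.

Inductive step : term -> term -> Prop :=
| st_beta : forall M N, step (App (Lam M) N) (subst M 0 N)
| st_sel : forall fs l Mj, In (l, Mj) fs -> step (Sel (Rec fs) l) Mj
| st_merge : forall fs gs, step (Merge (Rec fs) gs) (Rec (rec_merge fs gs))
| st_lam : forall M M', step M M' -> step (Lam M) (Lam M')
| st_appl : forall M M' N, step M M' -> step (App M N) (App M' N)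
| st_appr : forall M N N', step N N' -> step (App M N) (App M N')
| st_selc : forall M M' l, step M M' -> step (Sel M l) (Sel M' l)
| st_rec : forall fs1 fs2 l M M', step M M' ->
    step (Rec (fs1 ++ (l, M) :: fs2)) (Rec (fs1 ++ (l, M') :: fs2))
| st_mergel : forall M M' gs, step M M' -> step (Merge M gs) (Merge M' gs)
| st_merger : forall N fs1 fs2 l M M', step M M' ->
    step (Merge N (fs1 ++ (l, M) :: fs2)) (Merge N (fs1 ++ (l, M') :: fs2)).

Inductive ty : Type :=
| TAtom : atom -> ty
| TOmega : ty
| TArrow : ty -> ty -> ty
| TInter : ty -> ty -> ty
| TRecEmpty : ty
| TRecField : label -> ty -> ty
| TRecPlus : ty -> ty -> ty.

(** wf_ty s : s in T ;  rtype r : r in T_R *)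
Inductive wf_ty : ty -> Prop :=
| wf_atom : forall a, wf_ty (TAtom a)
| wf_omega : wf_ty TOmega
| wf_arrow : forall s t, wf_ty s -> wf_ty t -> wf_ty (TArrow s t)
| wf_inter : forall s t, wf_ty s -> wf_ty t -> wf_ty (TInter s t)
| wf_rtype : forall r, rtype r -> wf_ty r
with rtype : ty -> Prop :=
| rt_empty : rtype TRecEmpty
| rt_field : forall l s, wf_ty s -> rtype (TRecField l s)
| rt_plus : forall r1 r2, rtype r1 -> rtype r2 -> rtype (TRecPlus r1 r2)
| rt_inter : forall r1 r2, rtype r1 -> rtype r2 -> rtype (TInter r1 r2).

(** labels of a record type (only meaningful on record types) *)
Fixpoint ty_lbl (r : ty) : list label :=
  match r with
  | TRecEmpty => []
  | TRecField l _ => [l]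
  | TInter r1 r2 => ty_lbl r1 ++ ty_lbl r2
  | TRecPlus r1 r2 => ty_lbl r1 ++ ty_lbl r2
  | _ => []
  end.

(** * Subtyping: least preorder on T with the listed rules.
    "rho = rho'" is rendered as the two inequalities. *)
Inductive sub : ty -> ty -> Prop :=
| sub_refl : forall s, wf_ty s -> sub s s
| sub_trans : forall s t u, sub s t -> sub t u -> sub s u
| sub_omega : forall s, wf_ty s -> sub s TOmega
| sub_omega_arrow : sub TOmega (TArrow TOmega TOmega)
| sub_inter_l : forall s t, wf_ty s -> wf_ty t -> sub (TInter s t) s
| sub_inter_r : forall s t, wf_ty s -> wf_ty t -> sub (TInter s t) t
| sub_inter_glb : forall s t1 t2, sub s t1 -> sub s t2 -> sub s (TInter t1 t2)
| sub_arrow_inter : forall s t1 t2, wf_ty s -> wf_ty t1 -> wf_ty t2 ->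
    sub (TInter (TArrow s t1) (TArrow s t2)) (TArrow s (TInter t1 t2))
| sub_arrow : forall s1 s2 t1 t2, sub s2 s1 -> sub t1 t2 ->
    sub (TArrow s1 t1) (TArrow s2 t2)
| sub_field_empty : forall l s, wf_ty s -> sub (TRecField l s) TRecEmpty
| sub_field_inter : forall l s t, wf_ty s -> wf_ty t ->
    sub (TInter (TRecField l s) (TRecField l t)) (TRecField l (TInter s t))
| sub_field : forall l s t, sub s t -> sub (TRecField l s) (TRecField l t)
| sub_plus_empty_r1 : forall r, rtype r -> sub (TRecPlus r TRecEmpty) r
| sub_plus_empty_r2 : forall r, rtype r -> sub r (TRecPlus r TRecEmpty)
| sub_plus_empty_l1 : forall r, rtype r -> sub (TRecPlus TRecEmpty r) r
| sub_plus_empty_l2 : forall r, rtype r -> sub r (TRecPlus TRecEmpty r)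
| sub_plus_assoc1 : forall r1 r2 r3, rtype r1 -> rtype r2 -> rtype r3 ->
    sub (TRecPlus (TRecPlus r1 r2) r3) (TRecPlus r1 (TRecPlus r2 r3))
| sub_plus_assoc2 : forall r1 r2 r3, rtype r1 -> rtype r2 -> rtype r3 ->
    sub (TRecPlus r1 (TRecPlus r2 r3)) (TRecPlus (TRecPlus r1 r2) r3)
| sub_plus_inter1 : forall r1 r2 r3, rtype r1 -> rtype r2 -> rtype r3 ->
    sub (TRecPlus (TInter r1 r2) r3) (TInter (TRecPlus r1 r3) (TRecPlus r2 r3))
| sub_plus_inter2 : forall r1 r2 r3, rtype r1 -> rtype r2 -> rtype r3 ->
    sub (TInter (TRecPlus r1 r3) (TRecPlus r2 r3)) (TRecPlus (TInter r1 r2) r3)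
| sub_plus_same1 : forall l s t r, wf_ty s -> wf_ty t -> rtype r ->
    sub (TRecPlus (TRecField l s) (TInter (TRecField l t) r)) (TInter (TRecField l t) r)
| sub_plus_same2 : forall l s t r, wf_ty s -> wf_ty t -> rtype r ->
    sub (TInter (TRecField l t) r) (TRecPlus (TRecField l s) (TInter (TRecField l t) r))
| sub_plus_diff1 : forall l l' s t r, l <> l' -> wf_ty s -> wf_ty t -> rtype r ->
    sub (TRecPlus (TRecField l s) (TInter (TRecField l' t) r))
        (TInter (TRecField l' t) (TRecPlus (TRecField l s) r))
| sub_plus_diff2 : forall l l' s t r, l <> l' -> wf_ty s -> wf_ty t -> rtype r ->
    sub (TInter (TRecField l' t) (TRecPlus (TRecField l s) r))
        (TRecPlus (TRecField l s) (TInter (TRecField l' t) r))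
| sub_plus_mono_l : forall r1 r2 r, rtype r1 -> rtype r2 -> rtype r ->
    sub r1 r2 -> sub (TRecPlus r1 r) (TRecPlus r2 r)
(* r1 = r2 => r + r1 = r + r2 (the symmetric instance gives the other direction) *)
| sub_plus_cong_r : forall r r1 r2, rtype r -> rtype r1 -> rtype r2 ->
    sub r1 r2 -> sub r2 r1 -> sub (TRecPlus r r1) (TRecPlus r r2).

(** * Bases: entry i gives the (optional) type of de Bruijn variable i *)
Definition basis := list (option ty).

Definition basis_wf (G : basis) : Prop :=
  forall x s, nth_error G x = Some (Some s) -> wf_ty s.

Inductive typing : basis -> term -> ty -> Prop :=
| ty_var : forall G x s, nth_error G x = Some (Some s) -> typing G (Var x) s
| ty_lam : forall G M s t, wf_ty s -> typing (Some s :: G) M t ->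
    typing G (Lam M) (TArrow s t)
| ty_app : forall G M N s t, typing G M (TArrow s t) -> typing G N s ->
    typing G (App M N) t
| ty_inter : forall G M s t, typing G M s -> typing G M t -> typing G M (TInter s t)
| ty_omega : forall G M, typing G M TOmega
| ty_sub : forall G M s t, typing G M s -> sub s t -> typing G M t
| ty_rec_empty : forall G fs, typing G (Rec fs) TRecEmpty
| ty_rec_field : forall G fs l Mk s, In (l, Mk) fs -> typing G Mk s ->
    typing G (Rec fs) (TRecField l s)
| ty_sel : forall G M l s, typing G M (TRecField l s) -> typing G (Sel M l) s
| ty_merge : forall G M fs r1 r2, rtype r1 -> rtype r2 ->
    typing G M r1 -> typing G (Rec fs) r2 ->
    (forall l, In l (rec_lbl fs) <-> In l (ty_lbl r2)) ->
    typing G (Merge M fs) (TRecPlus r1 r2).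

(* Subject reduction goes by induction on the typing derivation; the content
   is in inverting the typings of the three redexes.

   Beta: read sigma -> tau as "the body has type tau under x : sigma" and
   intersections as conjunctions.  By narrowing of the basis this reading is
   preserved by subtyping, so G |- \x.M : sigma -> tau gives
   G, x : sigma |- M : tau, and the substitution lemma applies.

   Records: a record type rho determines the list of its fields, rho1 + rho2
   overriding the fields of rho1 by those of rho2, and rho is equivalent to the
   intersection of these fields.  Interpret field lists in valuations assigning
   to each label a set of types closed upwards and under intersection.
   Subtyping is sound for this reading; the congruence rules for + hold because
   the closure of the fields of rho1 is the least valuation satisfying rho1.
   For the valuation l |-> {sigma | G |- M_l : sigma} this inverts typings of
   <l_i = M_i>, which handles selection; the intersection of the fields types
   the merged record. *)

From Stdlib Require Import List Arith Lia.
Import ListNotations.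

Local Hint Constructors wf_ty rtype : core.

(* [rec_merge] is [override] at [A := term], by conversion. *)
Definition override {A} (L1 L2 : list (label * A)) : list (label * A) :=
  filter (fun p => negb (existsb (Nat.eqb (fst p)) (map fst L2))) L1 ++ L2.

Lemma existsb_eqb_In k ks : existsb (Nat.eqb k) ks = true <-> In k ks.
Proof.
  rewrite existsb_exists. split.
  - intros [k' [Hin Heq]]. apply Nat.eqb_eq in Heq. now subst.
  - intros Hin. exists k. split; [exact Hin | apply Nat.eqb_refl].
Qed.

Lemma in_override {A} (L1 L2 : list (label * A)) k x :
  In (k, x) (override L1 L2) <-> (In (k, x) L1 /\ ~ In k (map fst L2)) \/ In (k, x) L2.
Proof.
  unfold override. rewrite in_app_iff, filter_In. simpl. rewrite <- existsb_eqb_In.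
  destruct (existsb (Nat.eqb k) (map fst L2)); simpl; intuition discriminate.
Qed.

Lemma in_map_fst {A} k (L : list (label * A)) : In k (map fst L) <-> exists x, In (k, x) L.
Proof.
  rewrite in_map_iff. split.
  - intros [[k' x] [<- Hin]]. eauto.
  - intros [x Hin]. now exists (k, x).
Qed.

Lemma labels_override {A} (L1 L2 : list (label * A)) k :
  In k (map fst (override L1 L2)) <-> In k (map fst L1) \/ In k (map fst L2).
Proof.
  rewrite !in_map_fst. split.
  - intros [x Hin]. apply in_override in Hin as [[Hin _] | Hin]; eauto.
  - intros [[x Hin] | [x Hin]].
    + destruct (in_dec Nat.eq_dec k (map fst L2)) as [Hk | Hk].
      * apply in_map_fst in Hk as [y Hy]. exists y. apply in_override. auto.
      * exists x. apply in_override. auto.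
    + exists x. apply in_override. auto.
Qed.

Lemma NoDup_fst_functional {A} (L : list (label * A)) k x y :
  NoDup (map fst L) -> In (k, x) L -> In (k, y) L -> x = y.
Proof.
  induction L as [| [k' z] L IH]; simpl; [contradiction |].
  intros Hnd Hx Hy. inversion Hnd as [| ? ? Hk' HndL]; subst.
  destruct Hx as [Ex | Hx], Hy as [Ey | Hy].
  - congruence.
  - injection Ex as -> ->. exfalso. apply Hk', in_map_fst. eauto.
  - injection Ey as -> ->. exfalso. apply Hk', in_map_fst. eauto.
  - eauto.
Qed.

(** * Record types as lists of fields *)

Fixpoint rec_fields (r : ty) : list (label * ty) :=
  match r with
  | TRecEmpty => []
  | TRecField l s => [(l, s)]
  | TInter r1 r2 => rec_fields r1 ++ rec_fields r2
  | TRecPlus r1 r2 => override (rec_fields r1) (rec_fields r2)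
  | _ => []
  end.

Fixpoint fields_ty (L : list (label * ty)) : ty :=
  match L with
  | [] => TRecEmpty
  | (l, s) :: L' => TInter (TRecField l s) (fields_ty L')
  end.

Definition wf_fields (L : list (label * ty)) : Prop :=
  forall l s, In (l, s) L -> wf_ty s.

Lemma wf_fields_incl L1 L2 :
  (forall l s, In (l, s) L2 -> In (l, s) L1) -> wf_fields L1 -> wf_fields L2.
Proof. unfold wf_fields. eauto. Qed.

Lemma wf_fields_app L1 L2 : wf_fields L1 -> wf_fields L2 -> wf_fields (L1 ++ L2).
Proof. intros HL1 HL2 l s Hin. apply in_app_iff in Hin as [Hin | Hin]; eauto. Qed.

Lemma wf_fields_override L1 L2 : wf_fields L1 -> wf_fields L2 -> wf_fields (override L1 L2).
Proof. intros HL1 HL2 l s Hin. apply in_override in Hin as [[Hin _] | Hin]; eauto. Qed.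

Lemma wf_fields_nil : wf_fields [].
Proof. intros ? ? []. Qed.

Lemma wf_fields_cons l s L : wf_ty s -> wf_fields L -> wf_fields ((l, s) :: L).
Proof. intros Hs HL l' s' [E | Hin]; [now injection E as -> -> | eauto]. Qed.

Local Hint Resolve wf_fields_nil wf_fields_cons wf_fields_app wf_fields_override : core.

Lemma wf_fields_cons_inv l s L : wf_fields ((l, s) :: L) -> wf_ty s /\ wf_fields L.
Proof.
  intros HL. split; [apply (HL l s); now left |].
  intros l' s' Hin. apply (HL l' s'). now right.
Qed.

Lemma rec_fields_labels r l : In l (map fst (rec_fields r)) <-> In l (ty_lbl r).
Proof.
  induction r; simpl; try tauto.
  - rewrite map_app, !in_app_iff. tauto.
  - rewrite labels_override, in_app_iff. tauto.
Qed.

Lemma rec_fields_wf r : rtype r -> wf_fields (rec_fields r).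
Proof.
  induction 1; simpl; auto.
Qed.

Lemma fields_ty_rtype L : wf_fields L -> rtype (fields_ty L).
Proof.
  induction L as [| [l s] L IH]; simpl; intros HL; constructor;
    apply wf_fields_cons_inv in HL as [Hs HL]; auto.
Qed.

Local Hint Resolve fields_ty_rtype rec_fields_wf : core.

Lemma sub_wf s t : sub s t -> wf_ty s /\ wf_ty t.
Proof.
  induction 1; repeat match goal with H : _ /\ _ |- _ => destruct H end;
    try match goal with H : wf_ty (TRecField _ _) |- _ =>
          inversion H as [| | | | ? Hr]; inversion Hr; subst end;
    split; eauto 7.
Qed.

Definition ty_eqv (s t : ty) : Prop := sub s t /\ sub t s.

Lemma ty_eqv_refl s : wf_ty s -> ty_eqv s s.
Proof. split; now apply sub_refl. Qed.

Lemma ty_eqv_sym s t : ty_eqv s t -> ty_eqv t s.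
Proof. intros []; now split. Qed.

Lemma ty_eqv_trans s t u : ty_eqv s t -> ty_eqv t u -> ty_eqv s u.
Proof. intros [] []; split; eapply sub_trans; eauto. Qed.

Lemma sub_inter_mono s s' t t' : sub s s' -> sub t t' -> sub (TInter s t) (TInter s' t').
Proof.
  intros Hs Ht. destruct (sub_wf _ _ Hs), (sub_wf _ _ Ht).
  apply sub_inter_glb; eapply sub_trans; [apply sub_inter_l | | apply sub_inter_r |]; eauto.
Qed.

Lemma ty_eqv_inter s s' t t' : ty_eqv s s' -> ty_eqv t t' -> ty_eqv (TInter s t) (TInter s' t').
Proof. intros [] []; split; now apply sub_inter_mono. Qed.

Lemma ty_eqv_plus r1 r1' r2 r2' : rtype r1 -> rtype r1' -> rtype r2 -> rtype r2' ->
  ty_eqv r1 r1' -> ty_eqv r2 r2' -> ty_eqv (TRecPlus r1 r2) (TRecPlus r1' r2').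
Proof.
  intros ? ? ? ? [] []; split.
  - apply sub_trans with (TRecPlus r1' r2); [apply sub_plus_mono_l | apply sub_plus_cong_r]; auto.
  - apply sub_trans with (TRecPlus r1 r2'); [apply sub_plus_mono_l | apply sub_plus_cong_r]; auto.
Qed.

Lemma fields_ty_sub_field L l s : wf_fields L -> In (l, s) L -> sub (fields_ty L) (TRecField l s).
Proof.
  induction L as [| [l' s'] L IH]; simpl; intros HL Hin; [contradiction |].
  apply wf_fields_cons_inv in HL as [Hs' HL'].
  destruct Hin as [E | Hin].
  - injection E as -> ->. apply sub_inter_l; auto.
  - eapply sub_trans; [apply sub_inter_r | apply IH]; auto.
Qed.

Lemma fields_ty_sub_empty L : wf_fields L -> sub (fields_ty L) TRecEmpty.
Proof.
  induction L as [| [l s] L IH]; simpl; intros HL; [apply sub_refl; auto |].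
  apply wf_fields_cons_inv in HL as [Hs HL].
  eapply sub_trans; [apply sub_inter_l | apply sub_field_empty]; auto.
Qed.

Lemma sub_fields_ty t L : sub t TRecEmpty ->
  (forall l s, In (l, s) L -> sub t (TRecField l s)) -> sub t (fields_ty L).
Proof.
  induction L as [| [l s] L IH]; simpl; intros Hempty Hfields; [exact Hempty |].
  apply sub_inter_glb; auto.
Qed.

Lemma fields_ty_incl L1 L2 : wf_fields L1 ->
  (forall l s, In (l, s) L2 -> In (l, s) L1) -> sub (fields_ty L1) (fields_ty L2).
Proof.
  intros HL1 Hincl. apply sub_fields_ty.
  - now apply fields_ty_sub_empty.
  - intros l s Hin. apply fields_ty_sub_field; auto.
Qed.

Lemma fields_ty_same L1 L2 : wf_fields L1 ->
  (forall l s, In (l, s) L1 <-> In (l, s) L2) -> ty_eqv (fields_ty L1) (fields_ty L2).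
Proof.
  intros HL1 Hsame. assert (HL2 : wf_fields L2) by (eapply wf_fields_incl; [|eauto]; apply Hsame).
  split; apply fields_ty_incl; auto; apply Hsame.
Qed.

Lemma fields_ty_app L1 L2 : wf_fields L1 -> wf_fields L2 ->
  ty_eqv (fields_ty (L1 ++ L2)) (TInter (fields_ty L1) (fields_ty L2)).
Proof.
  intros HL1 HL2.
  split.
  - apply sub_inter_glb; apply fields_ty_incl; auto; intros; apply in_app_iff; auto.
  - apply sub_fields_ty.
    + eapply sub_trans; [apply sub_inter_l | apply fields_ty_sub_empty]; auto.
    + intros l s Hin. apply in_app_iff in Hin as [Hin | Hin].
      * eapply sub_trans; [apply sub_inter_l | apply fields_ty_sub_field; eauto]; auto.
      * eapply sub_trans; [apply sub_inter_r | apply fields_ty_sub_field; eauto]; auto.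
Qed.

Ltac fields_tauto :=
  let l := fresh "l" in let s := fresh "s" in
  intros l s; cbn [rec_fields];
  repeat progress (simpl; rewrite ?in_app_iff, ?map_app, ?in_override, ?labels_override);
  intuition (try (match goal with H : (_, _) = (_, _) |- _ => injection H as <- <- end);
             firstorder (subst; try congruence)).

Lemma ty_eqv_field_plus l s L : wf_ty s -> wf_fields L ->
  ty_eqv (TRecPlus (TRecField l s) (fields_ty L)) (fields_ty (override [(l, s)] L)).
Proof.
  intros Hs. induction L as [| [l' s'] L IH]; intros HL.
  - simpl. split.
    + eapply sub_trans; [apply sub_plus_empty_r1 | apply sub_inter_glb];
        [| apply sub_refl | apply sub_field_empty]; auto.
    + eapply sub_trans; [apply sub_inter_l | apply sub_plus_empty_r2]; auto.
  - cbn [fields_ty].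
    apply wf_fields_cons_inv in HL as [Hs' HL'].
    destruct (Nat.eq_dec l l') as [<- | Hne].
    + eapply ty_eqv_trans; [split; [apply sub_plus_same1 | apply sub_plus_same2]; auto |].
      change (TInter (TRecField l s') (fields_ty L)) with (fields_ty ((l, s') :: L)).
      apply fields_ty_same; auto. fields_tauto.
    + eapply ty_eqv_trans; [split; [apply sub_plus_diff1 | apply sub_plus_diff2]; auto |].
      eapply ty_eqv_trans; [apply ty_eqv_inter; [apply ty_eqv_refl | apply IH]; auto |].
      change (TInter (TRecField l' s') (fields_ty (override [(l, s)] L)))
        with (fields_ty ((l', s') :: override [(l, s)] L)).
      apply fields_ty_same; auto.
      fields_tauto.
Qed.

Lemma ty_eqv_fields_plus L1 L2 : wf_fields L1 -> wf_fields L2 ->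
  ty_eqv (TRecPlus (fields_ty L1) (fields_ty L2)) (fields_ty (override L1 L2)).
Proof.
  intros HL1 HL2. induction L1 as [| [l s] L1 IH]; cbn [fields_ty].
  - eapply ty_eqv_trans; [split; [apply sub_plus_empty_l1 | apply sub_plus_empty_l2]; auto |].
    apply fields_ty_same; auto. fields_tauto.
  - apply wf_fields_cons_inv in HL1 as [Hs HL1].
    eapply ty_eqv_trans; [split; [apply sub_plus_inter1 | apply sub_plus_inter2]; auto |].
    eapply ty_eqv_trans;
      [apply ty_eqv_inter; [apply (ty_eqv_field_plus l s L2) | apply IH]; auto |].
    eapply ty_eqv_trans; [apply ty_eqv_sym, fields_ty_app; auto |].
    apply fields_ty_same; auto. fields_tauto.
Qed.

Lemma ty_eqv_rec_fields r : rtype r -> ty_eqv r (fields_ty (rec_fields r)).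
Proof.
  induction 1 as [| l s Hs | r1 r2 Hr1 IH1 Hr2 IH2 | r1 r2 Hr1 IH1 Hr2 IH2]; simpl.
  - apply ty_eqv_refl; auto.
  - split.
    + apply sub_inter_glb; [apply sub_refl | apply sub_field_empty]; auto.
    + apply sub_inter_l; auto.
  - eapply ty_eqv_trans; [apply ty_eqv_plus with (r1' := fields_ty (rec_fields r1))
                                                (r2' := fields_ty (rec_fields r2)); auto |].
    apply ty_eqv_fields_plus; auto.
  - eapply ty_eqv_trans; [apply (ty_eqv_inter _ _ _ _ IH1 IH2) |].
    apply ty_eqv_sym, fields_ty_app; auto.
Qed.

(** * Valuations and soundness of subtyping *)

Definition fields_sat (v : label -> ty -> Prop) (L : list (label * ty)) : Prop :=
  forall l s, In (l, s) L -> v l s.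

Definition closed_val (v : label -> ty -> Prop) : Prop :=
  forall l, (forall s t, v l s -> sub s t -> v l t) /\
            (forall s t, v l s -> v l t -> v l (TInter s t)).

Definition entails (L1 L2 : list (label * ty)) : Prop :=
  forall v, closed_val v -> fields_sat v L1 -> fields_sat v L2.

Inductive sub_closure (S : ty -> Prop) : ty -> Prop :=
| sc_base s : S s -> sub_closure S s
| sc_sub s t : sub_closure S s -> sub s t -> sub_closure S t
| sc_inter s t : sub_closure S s -> sub_closure S t -> sub_closure S (TInter s t).

(* The least closed valuation satisfying [L]. *)
Definition canon_val (L : list (label * ty)) : label -> ty -> Prop :=
  fun l => sub_closure (fun s => In (l, s) L).

Lemma canon_val_closed L : closed_val (canon_val L).
Proof. split; intros; [eapply sc_sub | apply sc_inter]; eauto. Qed.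

Lemma canon_val_sat L : fields_sat (canon_val L) L.
Proof. intros l s Hin. now apply sc_base. Qed.

Lemma sub_closure_inhabited S s : sub_closure S s -> exists s0, S s0.
Proof. induction 1; eauto. Qed.

Lemma sub_closure_least S v l : closed_val v -> (forall s, S s -> v l s) ->
  forall s, sub_closure S s -> v l s.
Proof.
  intros Hv HS s Hs. destruct (Hv l) as [Hup Hinter].
  induction Hs; eauto.
Qed.

Lemma entails_at L1 L2 v l : closed_val v -> entails L1 L2 ->
  (forall s, In (l, s) L1 -> v l s) -> forall s, In (l, s) L2 -> v l s.
Proof.
  intros Hv H12 H1 s Hin.
  apply (sub_closure_least _ _ _ Hv H1).
  exact (H12 _ (canon_val_closed L1) (canon_val_sat L1) l s Hin).
Qed.

Lemma entails_labels L1 L2 l : entails L1 L2 -> In l (map fst L2) -> In l (map fst L1).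
Proof.
  intros H12 Hl. apply in_map_fst in Hl as [s Hin].
  apply (H12 _ (canon_val_closed L1) (canon_val_sat L1)), sub_closure_inhabited in Hin.
  apply in_map_fst, Hin.
Qed.

Lemma entails_incl L1 L2 : (forall l s, In (l, s) L2 -> In (l, s) L1) -> entails L1 L2.
Proof. intros Hincl v _ H1 l s Hin. auto. Qed.

Lemma entails_override_l L1 L2 L : entails L1 L2 -> entails (override L1 L) (override L2 L).
Proof.
  intros H12 v Hv Hsat l s Hin. apply in_override in Hin as [[Hin Hl] | Hin].
  - apply (entails_at L1 L2); auto.
    intros s' Hin'. apply Hsat, in_override. auto.
  - apply Hsat, in_override. auto.
Qed.

Lemma entails_override_r L L1 L2 : entails L1 L2 -> entails L2 L1 ->
  entails (override L L1) (override L L2).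
Proof.
  intros H12 H21 v Hv Hsat l s Hin. apply in_override in Hin as [[Hin Hl] | Hin].
  - apply Hsat, in_override. left. split; [exact Hin |].
    intros Hl1. apply Hl. eapply entails_labels; eauto.
  - apply (entails_at L1 L2); auto.
    intros s' Hin'. apply Hsat, in_override. auto.
Qed.

Theorem sub_entails s t : sub s t -> entails (rec_fields s) (rec_fields t).
Proof.
  induction 1; try solve [apply entails_incl; fields_tauto].
  - intros v Hv Hsat. apply IHsub2, IHsub1; auto.
  - intros v Hv Hsat l' s' Hin. apply in_app_iff in Hin as [Hin | Hin];
      [eapply IHsub1 | eapply IHsub2]; eauto.
  - intros v Hv Hsat l' s' [E | []]. injection E as <- <-.
    apply Hv; apply Hsat; simpl; auto.
  - intros v Hv Hsat l' s' [E | []]. injection E as <- <-.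
    eapply Hv; [apply Hsat; simpl |]; eauto.
  - apply entails_override_l; auto.
  - apply entails_override_r; auto.
Qed.

(** * Inversion for records *)

Definition rec_val (G : basis) (fs : list (label * term)) : label -> ty -> Prop :=
  fun l s => exists M, In (l, M) fs /\ typing G M s.

Lemma rec_val_closed G fs : NoDup (rec_lbl fs) -> closed_val (rec_val G fs).
Proof.
  intros Hnd l. split.
  - intros s t [M [Hin HM]] Hst. exists M. split; [exact Hin | eapply ty_sub; eauto].
  - intros s t [M [Hin HM]] [M' [Hin' HM']].
    rewrite (NoDup_fst_functional _ _ _ _ Hnd Hin' Hin) in HM'.
    exists M. split; [exact Hin | now apply ty_inter].
Qed.

Lemma typing_rec_sat G fs s : NoDup (rec_lbl fs) ->
  typing G (Rec fs) s -> fields_sat (rec_val G fs) (rec_fields s).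
Proof.
  intros Hnd H. remember (Rec fs) as R eqn:ER.
  induction H as [| | | G M s t _ IH1 _ IH2 | | G M s t _ IH Hst | | G fs' l Mk s Hin HMk _ | |];
    try discriminate; subst.
  - intros l s' Hin. apply in_app_iff in Hin as [Hin' | Hin']; [apply IH1 | apply IH2]; auto.
  - intros ? ? [].
  - eapply sub_entails; eauto using rec_val_closed.
  - intros ? ? [].
  - injection ER as <-. intros l' s' [E | []]. injection E as <- <-. now exists Mk.
Qed.

Lemma typing_rec_fields_ty G fs L : fields_sat (rec_val G fs) L -> typing G (Rec fs) (fields_ty L).
Proof.
  induction L as [| [l s] L IH]; simpl; intros Hsat; [constructor |].
  apply ty_inter.
  - destruct (Hsat l s) as [M [Hin HM]]; [now left |]. eapply ty_rec_field; eauto.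
  - apply IH. intros l' s' Hin. apply Hsat. now right.
Qed.

Lemma typing_sel_rec G fs l M s : NoDup (rec_lbl fs) -> In (l, M) fs ->
  typing G (Rec fs) (TRecField l s) -> typing G M s.
Proof.
  intros Hnd Hin H.
  destruct (typing_rec_sat _ _ _ Hnd H l s) as [M' [Hin' HM']]; [now left |].
  now rewrite (NoDup_fst_functional _ _ _ _ Hnd Hin Hin').
Qed.

Lemma typing_merge_rec G fs gs r1 r2 : rtype r1 -> rtype r2 ->
  NoDup (rec_lbl fs) -> NoDup (rec_lbl gs) ->
  typing G (Rec fs) r1 -> typing G (Rec gs) r2 ->
  (forall l, In l (rec_lbl gs) <-> In l (ty_lbl r2)) ->
  typing G (Rec (rec_merge fs gs)) (TRecPlus r1 r2).
Proof.
  intros Hr1 Hr2 Hnd1 Hnd2 H1 H2 Hlbl.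
  apply typing_rec_sat in H1, H2; auto.
  eapply ty_sub; [| apply (ty_eqv_rec_fields (TRecPlus r1 r2)); auto].
  apply typing_rec_fields_ty. intros l s Hin.
  apply in_override in Hin as [[Hin Hl] | Hin].
  - destruct (H1 l s Hin) as [M [HinM HM]]. exists M. split; [| exact HM].
    apply in_override. left. split; [exact HinM |].
    intros Hl'. apply Hl, rec_fields_labels, Hlbl, Hl'.
  - destruct (H2 l s Hin) as [M [HinM HM]]. exists M. split; [| exact HM].
    apply in_override. now right.
Qed.

(** * Inversion for abstractions and substitution *)

Fixpoint lam_sat (G : basis) (M : term) (s : ty) : Prop :=
  match s with
  | TArrow s1 s2 => typing (Some s1 :: G) M s2
  | TInter s1 s2 => lam_sat G M s1 /\ lam_sat G M s2
  | _ => True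
  end.

(* [sub] is reflexive only on well-formed types, and bases need not be. *)
Definition basis_sub (G' G : basis) : Prop :=
  forall x s, nth_error G x = Some (Some s) ->
  exists s', nth_error G' x = Some (Some s') /\ (s' = s \/ sub s' s).

Lemma basis_sub_cons G' G s s' : basis_sub G' G -> (s' = s \/ sub s' s) ->
  basis_sub (Some s' :: G') (Some s :: G).
Proof. intros HG Hs [| x] t; simpl; [injection 1 as <-; eauto | apply HG]. Qed.

Lemma typing_narrow G G' M t : typing G M t -> basis_sub G' G -> typing G' M t.
Proof.
  intros H. revert G'. induction H; intros G' HG'; eauto using typing.
  - destruct (HG' _ _ H) as [s' [Hx [<- | Hs']]]; eauto using typing.
  - apply ty_lam; auto. apply IHtyping, basis_sub_cons; auto.
Qed.

Lemma rtype_lam_sat G M r : rtype r -> lam_sat G M r.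
Proof. induction 1; simpl; auto. Qed.

Lemma sub_lam_sat s t G M : sub s t -> lam_sat G M s -> lam_sat G M t.
Proof.
  intros H. revert G M. induction H; intros G M Hs; simpl in *; try tauto; eauto using rtype_lam_sat.
  - apply ty_omega.
  - destruct Hs. now apply ty_inter.
  - eapply ty_sub; [| eauto]. eapply typing_narrow; [exact Hs |].
    apply basis_sub_cons; [intros x u Hx; eauto | auto].
Qed.

Lemma typing_lam_inv G M s : typing G (Lam M) s -> lam_sat G M s.
Proof.
  intros H. remember (Lam M) as L eqn:EL.
  induction H; try discriminate; simpl; auto.
  - now injection EL as <-.
  - eapply sub_lam_sat; eauto.
Qed.

Lemma rec_lbl_map_snd (f : label * term -> term) fs :
  rec_lbl (map (fun p => (fst p, f p)) fs) = rec_lbl fs.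
Proof. unfold rec_lbl. now rewrite map_map. Qed.

Lemma typing_lift G1 G2 G3 M t : typing (G1 ++ G2) M t ->
  typing (G1 ++ G3 ++ G2) (lift_by (length G3) (length G1) M) t.
Proof.
  intros H. remember (G1 ++ G2) as G eqn:EG. revert G1 EG.
  induction H; intros G1 EG; subst; simpl; eauto using typing.
  - destruct (Nat.leb_spec (length G1) x); apply ty_var.
    + rewrite nth_error_app2 in H by lia. rewrite !nth_error_app2 by lia.
      now replace (x + length G3 - length G1 - length G3) with (x - length G1) by lia.
    + rewrite nth_error_app1 in H |- * by lia. exact H.
  - apply ty_lam; auto. apply (IHtyping (Some s :: G1)); reflexivity.
  - eapply ty_rec_field; [| eauto]. apply in_map_iff. now exists (l, Mk).
  - apply ty_merge; auto.
    intros l. rewrite rec_lbl_map_snd. auto.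
Qed.

Lemma typing_subst G1 G2 M N s t : typing (G1 ++ Some s :: G2) M t -> typing G2 N s ->
  typing (G1 ++ G2) (subst M (length G1) N) t.
Proof.
  intros H HN. remember (G1 ++ Some s :: G2) as G eqn:EG. revert G1 EG.
  induction H; intros G1 EG; subst; simpl; eauto using typing.
  - destruct (Nat.ltb_spec x (length G1)); [| destruct (Nat.eqb_spec x (length G1))].
    + apply ty_var. rewrite nth_error_app1 in H |- * by lia. exact H.
    + subst. rewrite nth_error_app2, Nat.sub_diag in H by lia.
      injection H as <-. exact (typing_lift [] G2 G1 N s HN).
    + apply ty_var. rewrite nth_error_app2 in H |- * by lia.
      replace (x - length G1) with (S (Nat.pred x - length G1)) in H by lia. exact H.
  - apply ty_lam; auto. apply (IHtyping (Some s0 :: G1)); reflexivity.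
  - eapply ty_rec_field; [| eauto]. apply in_map_iff. now exists (l, Mk).
  - apply ty_merge; auto.
    intros l. rewrite rec_lbl_map_snd. auto.
Qed.

Lemma typing_beta G M N s t : typing G (Lam M) (TArrow s t) -> typing G N s ->
  typing G (subst M 0 N) t.
Proof. intros HM HN. exact (typing_subst [] G M N s t (typing_lam_inv _ _ _ HM) HN). Qed.

Lemma rec_lbl_replace fs1 fs2 l M M' :
  rec_lbl (fs1 ++ (l, M) :: fs2) = rec_lbl (fs1 ++ (l, M') :: fs2).
Proof. unfold rec_lbl. now rewrite !map_app. Qed.

Lemma subject_reduction G M N s : typing G M s -> wf_term M -> step M N -> typing G N s.
Proof.
  intros H. revert N.
  induction H as [G x s Hx | G M s t Hs HM IH | G M N s t HM IHM HN IHN | G M s t _ IH1 _ IH2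
                 | G M | G M s t _ IH Hst | G fs | G fs l Mk s Hin HMk IH | G M l s HM IH
                 | G M fs r1 r2 Hr1 Hr2 HM IHM Hfs IHfs Hlbl];
    intros N' Hwf Hstep.
  - inversion Hstep.
  - inversion Hwf; subst. inversion Hstep; subst. apply ty_lam; auto.
  - inversion Hwf; subst. inversion Hstep; subst.
    + eapply typing_beta; eauto.
    + eapply ty_app; eauto.
    + eapply ty_app; eauto.
  - apply ty_inter; auto.
  - apply ty_omega.
  - eapply ty_sub; eauto.
  - inversion Hstep; subst. apply ty_rec_empty.
  - inversion Hwf as [| | | | ? _ Hwfs |]; subst.
    inversion Hstep as [| | | | | | | fs1 fs2 l' M M' HMM' | |]; subst.
    rewrite Forall_forall in Hwfs.
    apply in_app_iff in Hin as [Hin | [E | Hin]].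
    + eapply ty_rec_field; [| exact HMk]. apply in_app_iff. now left.
    + injection E as -> ->. eapply ty_rec_field; [apply in_app_iff; right; now left |].
      apply IH; auto. apply (Hwfs (l, Mk)), in_app_iff. right. now left.
    + eapply ty_rec_field; [| exact HMk]. apply in_app_iff. right. now right.
  - inversion Hwf as [| | | M0 l0 HwfM | |]; subst. inversion Hstep; subst.
    + inversion HwfM; subst. eapply typing_sel_rec; eauto.
    + apply ty_sel; auto.
  - inversion Hwf as [| | | | | M0 fs0 HwfM Hnd Hwfs]; subst. inversion Hstep; subst.
    + inversion HwfM; subst. apply typing_merge_rec; auto.
    + apply ty_merge; auto.
    + apply ty_merge; auto.
      * apply IHfs; [constructor; auto | now apply st_rec].
      * intros l0. erewrite rec_lbl_replace. eauto.
Qed.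

Theorem theorem3p16 :
  forall (G : basis) (M N : term) (s : ty),
    basis_wf G -> wf_term M -> wf_ty s ->
    typing G M s -> step M N -> typing G N s.
Proof.
  intros G M N s _ HM _ Hty Hstep. exact (subject_reduction G M N s Hty HM Hstep).
Qed.
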